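(* Let $n,r\geq 1$ and let $F$ be a real-valued mapping defined on $\bigcup_{\eta\subset[n]}\Pi(\eta\times[r])$ which has the connectedness factorization property: for every nonempty $\eta\subset[n]$ and every $\rho\in\Pi(\eta\times[r])$, $$F(\rho)=\prod_{b\subset\eta:\ b\times[r]\in\rho\vee\pi_\eta}F(\rho_b),\qquad \rho_b:=\{c\in\rho: c\subset b\times[r]\}.$$ Then for every nonempty $\eta\subset[n]$ the virtual cumulant of $F$ satisfies $$C_F(\eta)=\sum_{\sigma\in\Pi(\eta\times[r]):\ \sigma\vee\pi_\eta=\widehat{1}}F(\sigma),$$ the sum being over connected partitions of $\eta\times[r]$.
   Context: $[n]=\{1,\dots,n\}$; $\Pi(S)$ is the set of partitions of a finite set $S$; $\rho\vee\sigma$ is the finest partition coarser than $\rho$ and $\sigma$, $\widehat{1}$ is the one-block partition. For $\eta\subset[n]$, $\pi_\eta=\{\pi_k:k\in\eta\}$ with $\pi_k=\{(k,1),\dots,(k,r)\}$; note that every block of $\rho\vee\pi_\eta$ has the form $b\times[r]$ with $b\subset\eta$. The Möbius transform is $\widehat{F}(\eta):=\sum_{\rho\in\Pi(\eta\times[r])}F(\rho)$, $\widehat F(\emptyset)=0$. The virtual cumulant $C_F$ is defined by $C_F(\eta)=\widehat F(\eta)$ when $|\eta|=1$, and recursively $C_F(\eta)=\widehat F(\eta)-\sum_{\sigma\in\Pi(\eta),\,|\sigma|\geq 2}\prod_{b\in\sigma}C_F(b)$ for $|\eta|\geq 2$. *)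

From HB Require Import structures.
From mathcomp Require Import all_boot all_order all_algebra.
Set Implicit Arguments. Unset Strict Implicit. Unset Printing Implicit Defensive.
Import Order.TTheory GRing.Theory Num.Theory.
Local Open Scope ring_scope.

Section VirtualCumulants.
Variables (R : comNzRingType) (n r : nat).
Local Notation T := ('I_n * 'I_r)%type.

Definition cyl (eta : {set 'I_n}) : {set T} := setX eta [set: 'I_r].

Definition is_part (eta : {set 'I_n}) (rho : {set {set T}}) : bool :=
  partition rho (cyl eta).

Definition pi_eta (eta : {set 'I_n}) : {set {set T}} :=
  [set [set (k, j) | j : 'I_r] | k in eta].

(* join of two partitions P, Q of the same set: the finest common coarsening,
   i.e. the classes of the equivalence generated by "lie in a common block". *)
Definition pjoin (P Q : {set {set T}}) : {set {set T}} :=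
  equivalence_partition
    (connect (fun x y => [exists B in P :|: Q, (x \in B) && (y \in B)]))
    (cover P).

Definition one_hat (eta : {set 'I_n}) : {set {set T}} := [set cyl eta].

Definition restr (rho : {set {set T}}) (b : {set 'I_n}) : {set {set T}} :=
  [set c in rho | c \subset cyl b].

Definition mobius (F : {set {set T}} -> R) (eta : {set 'I_n}) : R :=
  if eta == set0 then 0 else \sum_(rho | is_part eta rho) F rho.

(* Virtual cumulant, by recursion on a fuel parameter; the actual cumulant
   uses fuel #|eta|, which suffices since blocks of a partition with >= 2
   blocks are strictly smaller. *)
Fixpoint vcum_fuel (F : {set {set T}} -> R) (k : nat) (eta : {set 'I_n}) : R :=
  match k with
  | 0 => 0
  | k'.+1 =>
      if #|eta| == 1%N then mobius F eta
      else mobius F eta -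
           \sum_(sigma : {set {set 'I_n}} | partition sigma eta && (2 <= #|sigma|)%N)
              \prod_(b in sigma) vcum_fuel F k' b
  end.

Definition vcum (F : {set {set T}} -> R) (eta : {set 'I_n}) : R :=
  vcum_fuel F #|eta| eta.

Definition conn_factorization (F : {set {set T}} -> R) : Prop :=
  forall (eta : {set 'I_n}) (rho : {set {set T}}),
    eta != set0 -> is_part eta rho ->
    F rho = \prod_(b : {set 'I_n} | (b \subset eta) &&
                                   (cyl b \in pjoin rho (pi_eta eta)))
              F (restr rho b).

End VirtualCumulants.

From HB Require Import structures.
From mathcomp Require Import all_boot all_order all_algebra.
Import Order.TTheory GRing.Theory Num.Theory.
Set Implicit Arguments. Unset Strict Implicit. Unset Printing Implicit Defensive.
Local Open Scope ring_scope.

(* For a partition rho of eta x [r], every block of the join of rho with pi_eta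
   is a cylinder b x [r], and the bases b form a partition tau of eta; moreover
   b x [r] is such a block exactly when the restriction rho_b is a connected
   partition of b x [r]. Conversely, gluing connected partitions of the blocks of
   any partition tau of eta yields a partition whose bases are tau. Hence
   partitions of eta x [r] correspond to a partition tau of eta together with a
   connected partition of each b x [r], b in tau, and the factorization property
   gives Fhat(eta) = sum_tau prod_(b in tau) G(b), with G(b) the sum of F over
   connected partitions of b x [r]. The recursion defining C_F inverts exactly
   this relation, so C_F = G by induction on |eta|. *)

Lemma connect_eq_in (T : finType) (e e' : rel T) (a : {pred T}) :
    {in a, forall x, e x =1 e' x} -> {in a, forall x y, e x y -> y \in a} ->
  {in a, forall x, connect e x =1 connect e' x}.
Proof.
have sub (f f' : rel T) : {in a, forall x, f x =1 f' x} ->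
    {in a, forall x y, f x y -> y \in a} ->
    {in a, forall x y, connect f x y -> connect f' x y}.
  move=> eq_ff' cl_a x xa _ /connectP[p fp ->].
  elim: p x xa fp => [|z p IHp] x xa //= /andP[fxz fp].
  have f'xz : f' x z by rewrite -eq_ff'.
  exact: connect_trans (connect1 f'xz) (IHp z (cl_a x xa z fxz) fp).
move=> eq_ee' cl_a x xa y; apply/idP/idP; apply: sub => //.
- by move=> u ua v; rewrite eq_ee'.
- by move=> u ua v; rewrite -eq_ee' //; apply: cl_a.
Qed.

Section Partitions.
Variable T : finType.
Implicit Types (P Q : {set {set T}}) (D B C : {set T}).

Lemma partition_block_eq P D C C' x :
  partition P D -> C \in P -> C' \in P -> x \in C -> x \in C' -> C = C'.
Proof.
move=> /partition_trivIset tiP PC PC' Cx C'x.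
by rewrite -(def_pblock tiP PC Cx) (def_pblock tiP PC' C'x).
Qed.

Lemma partition_set1 D : D != set0 -> partition [set D] D.
Proof. by move=> D0; rewrite /partition cover1 eqxx trivIset1 inE eq_sym D0. Qed.

Lemma partition_neq_set1 P D :
  partition P D -> D != set0 -> (P != [set D]) = (1 < #|P|)%N.
Proof.
move=> partP D0; apply/idP/idP => [neqPD | ]; last first.
  by apply: contraTneq => ->; rewrite cards1.
rewrite ltnNge leq_eqVlt ltnS leqn0 cards_eq0; apply/negP => /orP[/cards1P[B eqPB]|/eqP P0].
  by move: neqPD; rewrite -(cover_partition partP) eqPB cover1 eqxx.
by move: D0; rewrite -(cover_partition partP) P0 /cover big_set0 eqxx.
Qed.

Lemma partition_card_lt P D B :
  partition P D -> (1 < #|P|)%N -> B \in P -> (#|B| < #|D|)%N.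
Proof.
move=> partP P_gt1 PB; apply: proper_card; rewrite properEneq (partitionS partP PB) andbT.
have /set0Pn[B' /setD1P[neqB'B PB']] : P :\ B != set0.
  by rewrite -card_gt0; move: P_gt1; rewrite (cardsD1 B) PB.
apply: contra neqB'B => /eqP eqBD.
have /set0Pn[x B'x] := partition_neq0 partP PB'.
have Bx : x \in B by rewrite eqBD (subsetP (partitionS partP PB')).
by rewrite (partition_block_eq partP PB' PB B'x Bx).
Qed.

Lemma partition_memE P D C x :
  partition P D -> x \in D -> x \in C -> (C \in P) = (pblock P x == C).
Proof.
move=> partP Dx Cx; apply/idP/eqP => [PC | <-].
  exact: def_pblock (partition_trivIset partP) PC Cx.
by apply: pblock_mem; rewrite (cover_partition partP).
Qed.

Lemma partition_eq_set1 P D : partition P D -> D \in P -> P = [set D].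
Proof.
move=> partP PD; apply/setP => C; rewrite inE; apply/idP/eqP => [PC | -> //].
have /set0Pn[x Cx] := partition_neq0 partP PC.
have Dx := subsetP (partitionS partP PC) x Cx.
exact: partition_block_eq partP PC PD Cx Dx.
Qed.

Lemma partition_subset_eq P Q D :
  partition P D -> partition Q D -> P \subset Q -> P = Q.
Proof.
move=> partP partQ sPQ; apply/eqP; rewrite eqEsubset sPQ; apply/subsetP => C QC.
have /set0Pn[x Cx] := partition_neq0 partQ QC.
have Dx := subsetP (partitionS partQ QC) x Cx.
have PPx : pblock P x \in P by apply: pblock_mem; rewrite (cover_partition partP).
have Px : x \in pblock P x by rewrite mem_pblock (cover_partition partP).
by rewrite (partition_block_eq partQ QC (subsetP sPQ _ PPx) Cx Px).
Qed.

End Partitions.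

Section JoinWithFibers.
Variables (n r : nat).
Hypothesis r_gt0 : (0 < r)%N.
Local Notation T := ('I_n * 'I_r)%type.
Let j0 : 'I_r := Ordinal r_gt0.

Lemma in_cyl (b : {set 'I_n}) (x : T) : (x \in cyl r b) = (x.1 \in b).
Proof. by case: x => k j; rewrite in_setX in_setT andbT. Qed.

Lemma mem_fiber (k : 'I_n) (x : T) : (x \in [set (k, j) | j : 'I_r]) = (x.1 == k).
Proof.
by apply/imsetP/eqP => [[j _ ->] | <-] //; exists x.2; rewrite // -surjective_pairing.
Qed.

Lemma cyl_inj : injective (@cyl n r).
Proof.
move=> b b' eq_cyl; apply/setP => k.
by have := congr1 (fun A : {set T} => (k, j0) \in A) eq_cyl; rewrite !in_cyl.
Qed.

Lemma cylS (b b' : {set 'I_n}) : b \subset b' -> cyl r b \subset cyl r b'.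
Proof. by move=> sbb'; apply: setXS. Qed.

Definition join_rel (P Q : {set {set T}}) : rel T :=
  fun x y => [exists B in P :|: Q, (x \in B) && (y \in B)].

Lemma join_connect_sym P Q : connect_sym (join_rel P Q).
Proof.
by apply: sym_connect_sym => x y; apply: eq_existsb => B; rewrite [(x \in B) && _]andbC.
Qed.

Section Blocks.
Variables (eta : {set 'I_n}) (rho : {set {set T}}).
Hypothesis rho_part : is_part eta rho.
Local Notation e := (join_rel rho (pi_eta r eta)).
Local Notation J := (pjoin rho (pi_eta r eta)).

Lemma join_rel_cyl u v : e u v -> (u \in cyl r eta) && (v \in cyl r eta).
Proof.
case/existsP=> B /andP[]; rewrite inE => /orP[rhoB | /imsetP[k eta_k ->]] /andP[uB vB].
  by rewrite -(cover_partition rho_part); apply/andP; split; apply/bigcupP; exists B.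
by move: uB vB; rewrite !in_cyl !mem_fiber => /eqP-> /eqP->; rewrite eta_k.
Qed.

Lemma join_rel_block c x y : c \in rho -> x \in c -> y \in c -> e x y.
Proof. by move=> rho_c cx cy; apply/existsP; exists c; rewrite inE rho_c cx cy. Qed.

Lemma join_rel_fiber u v : u.1 \in eta -> u.1 = v.1 -> e u v.
Proof.
move=> eta_u1 eq_u1v1; apply/existsP; exists [set (u.1, j) | j : 'I_r].
by rewrite !mem_fiber eq_u1v1 eqxx !andbT inE imset_f ?orbT -?eq_u1v1.
Qed.

Lemma connect_join_cyl x y : x \in cyl r eta -> connect e x y -> y \in cyl r eta.
Proof.
have closed_eta : closed e (cyl r eta) by move=> u v /join_rel_cyl /andP[-> ->].
by move=> eta_x /(closed_connect closed_eta) <-.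
Qed.

Lemma pjoinE : J = equivalence_partition (connect e) (cyl r eta).
Proof. by rewrite /pjoin (cover_partition rho_part). Qed.

Lemma pjoin_partition : partition J (cyl r eta).
Proof.
rewrite pjoinE; apply: equivalence_partitionP => x y z _ _ _.
by split=> // /(same_connect (@join_connect_sym _ _)).
Qed.

Lemma mem_pblock_pjoin x y : x \in cyl r eta ->
  (y \in pblock J x) = (y \in cyl r eta) && connect e x y.
Proof.
move=> eta_x; case: (boolP (y \in cyl r eta)) => [eta_y | eta'y].
  rewrite pjoinE pblock_equivalence_partition // => u v w _ _ _.
  by split=> // /(same_connect (@join_connect_sym _ _)).
apply: contraNF eta'y => /(subsetP (partitionS pjoin_partition (pblock_mem _))); apply.
by rewrite (cover_partition pjoin_partition).
Qed.

Lemma pblock_pjoinS x : x \in cyl r eta -> pblock rho x \subset pblock J x.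
Proof.
move=> eta_x; have rho_x : x \in cover rho by rewrite (cover_partition rho_part).
have rho_xx : x \in pblock rho x by rewrite mem_pblock.
apply/subsetP => z xz; rewrite mem_pblock_pjoin //.
have e_xz := join_rel_block (pblock_mem rho_x) rho_xx xz.
by rewrite connect1 // andbT; case/andP: (join_rel_cyl e_xz).
Qed.

Lemma pjoin_block_cyl C : C \in J -> exists2 b : {set 'I_n}, b \subset eta & C = cyl r b.
Proof.
move=> JC; have /set0Pn[x Cx] := partition_neq0 pjoin_partition JC.
have eta_x := subsetP (partitionS pjoin_partition JC) x Cx.
exists [set k in eta | connect e x (k, j0)].
  by apply/subsetP => k; rewrite inE => /andP[].
rewrite -(def_pblock (partition_trivIset pjoin_partition) JC Cx).
apply/setP => y; rewrite mem_pblock_pjoin // !in_cyl inE.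
case: (boolP (y.1 \in eta)) => //= eta_y1.
by apply: (same_connect_r (@join_connect_sym _ _)); apply/connect1/join_rel_fiber.
Qed.

End Blocks.

Definition conn_part (b : {set 'I_n}) (s : {set {set T}}) : bool :=
  is_part b s && (pjoin s (pi_eta r b) == one_hat r b).

Lemma conn_partE b s :
  conn_part b s = is_part b s && (cyl r b \in pjoin s (pi_eta r b)).
Proof.
rewrite /conn_part /one_hat; case: (boolP (is_part b s)) => //= part_s.
by apply/eqP/idP => [-> | /(partition_eq_set1 (pjoin_partition part_s))]; rewrite ?set11.
Qed.

Definition glue (tau : {set {set 'I_n}}) (f : {set 'I_n} -> {set {set T}}) :
  {set {set T}} := \bigcup_(b in tau) f b.

Section JoinBase.
Variables (eta : {set 'I_n}) (rho : {set {set T}}).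
Hypothesis rho_part : is_part eta rho.
Local Notation e := (join_rel rho (pi_eta r eta)).
Local Notation J := (pjoin rho (pi_eta r eta)).

Definition join_base : {set {set 'I_n}} :=
  [set b : {set 'I_n} | (b \subset eta) && (cyl r b \in J)].

Lemma join_base_partition : partition join_base eta.
Proof.
have eta_J := cover_partition (pjoin_partition rho_part).
apply/and3P; split.
- apply/eqP/setP => k; apply/bigcupP/idP => [[b] | eta_k].
    by rewrite inE => /andP[/subsetP sb _]; apply: sb.
  have eta_x : (k, j0) \in cyl r eta by rewrite in_cyl.
  have J_x : pblock J (k, j0) \in J by rewrite pblock_mem ?eta_J.
  have [b sb eq_b] := pjoin_block_cyl rho_part J_x.
  exists b; first by rewrite inE sb -eq_b.
  by rewrite -[k]/((k, j0).1) -in_cyl -eq_b mem_pblock eta_J.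
- apply/trivIsetP => b b' /[!inE] /andP[_ J_b] /andP[_ J_b'] neq_bb'.
  rewrite -setI_eq0; apply: contraNT neq_bb' => /set0Pn[k /setIP[bk b'k]].
  apply/eqP/cyl_inj/(partition_block_eq (pjoin_partition rho_part) J_b J_b' (x := (k, j0)));
    by rewrite in_cyl.
- rewrite inE; apply/negP => /andP[_].
  have -> : cyl r (set0 : {set 'I_n}) = set0 by apply/setP => x; rewrite in_cyl !inE.
  by rewrite (partition0 (pjoin_partition rho_part)).
Qed.

Lemma join_base_cover c :
  c \in rho -> exists2 b : {set 'I_n}, b \in join_base & c \subset cyl r b.
Proof.
move=> rho_c; have /set0Pn[x cx] := partition_neq0 rho_part rho_c.
have eta_x := subsetP (partitionS rho_part rho_c) x cx.
have J_x : pblock J x \in J.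
  by rewrite pblock_mem ?(cover_partition (pjoin_partition rho_part)).
have [b sb eq_b] := pjoin_block_cyl rho_part J_x.
exists b; first by rewrite inE sb -eq_b.
by rewrite -eq_b -(def_pblock (partition_trivIset rho_part) rho_c cx) pblock_pjoinS.
Qed.

Lemma restr_partition b : b \in join_base -> is_part b (restr rho b).
Proof.
rewrite inE => /andP[sb J_b].
have pblock_sub x : x \in cyl r b -> pblock rho x \subset cyl r b.
  move=> bx; rewrite -(def_pblock (partition_trivIset (pjoin_partition rho_part)) J_b bx).
  exact/(pblock_pjoinS rho_part)/(subsetP (cylS sb)).
apply/and3P; split.
- apply/eqP/setP => y; apply/bigcupP/idP => [[c] | by_].
    by rewrite inE => /andP[_ /subsetP]; apply.
  have rho_y : y \in cover rho by rewrite (cover_partition rho_part) (subsetP (cylS sb)).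
  by exists (pblock rho y); rewrite ?inE ?pblock_mem ?pblock_sub ?mem_pblock.
- apply: trivIsetS (partition_trivIset rho_part).
  by apply/subsetP => c; rewrite inE => /andP[].
- by rewrite inE (partition0 rho_part).
Qed.

Section Restriction.
Variable b : {set 'I_n}.
Hypotheses (sb : b \subset eta) (restr_part : is_part b (restr rho b)).
Local Notation e_b := (join_rel (restr rho b) (pi_eta r b)).

Lemma join_rel_restr : {in cyl r b, forall u, e u =1 e_b u}.
Proof.
move=> u bu v; apply/existsP/existsP => -[B /andP[]]; rewrite !inE.
  case/orP => [rho_B | /imsetP[k _ ->]] /andP[uB vB].
    have restr_u : u \in cover (restr rho b) by rewrite (cover_partition restr_part).
    have := pblock_mem restr_u; rewrite [in X in X -> _]inE => /andP[rho_C sC].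
    have eq_CB := partition_block_eq rho_part rho_C rho_B (etrans (mem_pblock _ u) restr_u) uB.
    by exists B; rewrite -eq_CB inE pblock_mem ?rho_C ?sC //= eq_CB uB vB.
  have bk : k \in b by move: uB; rewrite mem_fiber => /eqP <-; rewrite -in_cyl.
  by exists [set (k, j) | j : 'I_r]; rewrite inE imset_f ?orbT ?uB ?vB.
case/orP => [/andP[rho_B _] | /imsetP[k bk ->]] uvB.
  by exists B; rewrite inE rho_B.
by exists [set (k, j) | j : 'I_r]; rewrite inE imset_f ?orbT ?(subsetP sb).
Qed.

Lemma pblock_pjoin_restr x :
  x \in cyl r b -> pblock J x = pblock (pjoin (restr rho b) (pi_eta r b)) x.
Proof.
move=> bx; have eta_x := subsetP (cylS sb) x bx.
have closed_b : {in cyl r b, forall u v, e u v -> v \in cyl r b}.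
  by move=> u bu v; rewrite join_rel_restr // => /(join_rel_cyl restr_part) /andP[].
apply/setP => y; rewrite !mem_pblock_pjoin // (connect_eq_in join_rel_restr closed_b bx).
case b_xy: (connect e_b x y); rewrite ?andbF // !andbT.
have b_y := connect_join_cyl restr_part bx b_xy.
by rewrite b_y (subsetP (cylS sb)).
Qed.

End Restriction.

Lemma join_baseE b : (b \in join_base) = (b \subset eta) && conn_part b (restr rho b).
Proof.
apply/idP/andP => [base_b | [sb]]; last first.
  rewrite conn_partE => /andP[restr_part J_b].
  have /set0Pn[x bx] := partition_neq0 (pjoin_partition restr_part) J_b.
  have eta_x := subsetP (cylS sb) x bx.
  rewrite inE sb (partition_memE (pjoin_partition rho_part) eta_x bx).
  rewrite (pblock_pjoin_restr sb restr_part bx).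
  by rewrite -(partition_memE (pjoin_partition restr_part) bx bx).
have restr_part := restr_partition base_b.
move: base_b; rewrite inE => /andP[sb J_b]; rewrite sb conn_partE restr_part.
have /set0Pn[x bx] := partition_neq0 (pjoin_partition rho_part) J_b.
have eta_x := subsetP (cylS sb) x bx.
rewrite (partition_memE (pjoin_partition restr_part) bx bx).
rewrite -(pblock_pjoin_restr sb restr_part bx).
by rewrite -(partition_memE (pjoin_partition rho_part) eta_x bx).
Qed.

Lemma glue_join_base : glue join_base (restr rho) = rho.
Proof.
apply/setP => c; apply/bigcupP/idP => [[b _] | rho_c]; first by rewrite inE => /andP[].
by have [b base_b sc] := join_base_cover rho_c; exists b; rewrite // inE rho_c.
Qed.

End JoinBase.

Section Glue.
Variables (eta : {set 'I_n}) (tau : {set {set 'I_n}}) (f : {set 'I_n} -> {set {set T}}).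
Hypotheses (tau_part : partition tau eta) (f_part : {in tau, forall b, is_part b (f b)}).

Lemma glue_block_cyl b c : b \in tau -> c \in f b -> c \subset cyl r b.
Proof. by move=> tau_b; apply: partitionS (f_part tau_b). Qed.

Lemma glue_partition : is_part eta (glue tau f).
Proof.
apply/and3P; split.
- apply/eqP/setP => x; apply/bigcupP/idP => [[c /bigcupP[b tau_b fb_c] cx] | eta_x].
    rewrite in_cyl (subsetP (partitionS tau_part tau_b)) //.
    by rewrite -in_cyl (subsetP (glue_block_cyl tau_b fb_c)).
  have : x.1 \in cover tau by rewrite (cover_partition tau_part) -in_cyl.
  case/bigcupP => b tau_b bx.
  have : x \in cover (f b) by rewrite (cover_partition (f_part tau_b)) in_cyl.
  by case/bigcupP => c fb_c cx; exists c => //; apply/bigcupP; exists b.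
- apply/trivIsetP => c c' /bigcupP[b tau_b fb_c] /bigcupP[b' tau_b' fb'_c'] neq_cc'.
  have [eq_bb' | neq_bb'] := eqVneq b b'.
    rewrite -eq_bb' in fb'_c'.
    exact: trivIsetP (partition_trivIset (f_part tau_b)) _ _ fb_c fb'_c' neq_cc'.
  rewrite -setI_eq0; apply: contraNT neq_bb' => /set0Pn[x /setIP[cx c'x]].
  apply/eqP/(partition_block_eq tau_part tau_b tau_b' (x := x.1)); rewrite -in_cyl.
    exact: subsetP (glue_block_cyl tau_b fb_c) x cx.
  exact: subsetP (glue_block_cyl tau_b' fb'_c') x c'x.
- by apply/negP => /bigcupP[b tau_b]; rewrite (partition0 (f_part tau_b)).
Qed.

Lemma restr_glue b : b \in tau -> restr (glue tau f) b = f b.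
Proof.
move=> tau_b; apply/setP => c; rewrite inE.
apply/andP/idP => [[/bigcupP[b' tau_b' fb'_c] sc] | fb_c].
  have /set0Pn[x cx] := partition_neq0 (f_part tau_b') fb'_c.
  suff -> : b = b' by [].
  apply: (partition_block_eq tau_part tau_b tau_b' (x := x.1)); rewrite -in_cyl.
    exact: subsetP sc x cx.
  exact: subsetP (glue_block_cyl tau_b' fb'_c) x cx.
by split; [apply/bigcupP; exists b | apply: glue_block_cyl].
Qed.

Lemma join_base_glue :
  {in tau, forall b, conn_part b (f b)} -> join_base eta (glue tau f) = tau.
Proof.
move=> f_conn; apply/esym/(partition_subset_eq tau_part).
  exact: join_base_partition glue_partition.
apply/subsetP => b tau_b.
by rewrite join_baseE ?glue_partition // (partitionS tau_part tau_b) restr_glue ?f_conn.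
Qed.

End Glue.

End JoinWithFibers.

Section ConnectedExpansion.
Variables (R : comNzRingType) (n r : nat).
Hypothesis r_gt0 : (0 < r)%N.
Local Notation T := ('I_n * 'I_r)%type.
Variable F : {set {set T}} -> R.

Definition conn_sum (b : {set 'I_n}) : R := \sum_(s | conn_part b s) F s.

Lemma sum_parts_with_join_base (eta : {set 'I_n}) (tau : {set {set 'I_n}}) :
    partition tau eta ->
  \sum_(rho | is_part eta rho && (join_base eta rho == tau)) \prod_(b in tau) F (restr rho b) =
  \sum_(f in pfamily set0 (mem tau) (@conn_part n r)) \prod_(b in tau) F (f b).
Proof.
move=> tau_part.
(* Reindex along rho |-> (rho_b)_(b in tau), whose inverse is glue tau. *)
pose restrs (rho : {set {set T}}) : {ffun {set 'I_n} -> {set {set T}}} :=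
  [ffun b => if b \in tau then restr rho b else set0].
rewrite (reindex_onto (fun f : {ffun {set 'I_n} -> {set {set T}}} => glue tau f) restrs) /=;
  last first.
  move=> rho /andP[rho_part /eqP base_rho].
  rewrite -[RHS](glue_join_base r_gt0 rho_part) base_rho /glue.
  by apply: eq_bigr => b tau_b; rewrite ffunE tau_b.
apply: eq_big => f; last first.
  move=> /andP[_ /eqP eq_f]; apply: eq_bigr => b tau_b.
  by rewrite -{2}eq_f ffunE tau_b.
apply/idP/pfamilyP => [/andP[/andP[glue_part /eqP base_glue] /eqP eq_f] | [supp_f f_conn]].
  have fE b : f b = if b \in tau then restr (glue tau f) b else set0.
    by rewrite -{1}eq_f ffunE.
  split.
    by apply/subsetP => b; rewrite inE fE; case: ifP => // _; rewrite eqxx.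
  move=> b tau_b; rewrite unfold_in fE tau_b.
  have : b \in join_base eta (glue tau f) by rewrite base_glue.
  by rewrite join_baseE // => /andP[].
have f_part : {in tau, forall b, is_part b (f b)} by move=> b /f_conn /andP[].
rewrite glue_partition // join_base_glue // eqxx; apply/eqP/ffunP => b; rewrite ffunE.
case: ifP => [tau_b | tau'b]; first by rewrite (restr_glue tau_part f_part tau_b).
by apply/esym/eqP; apply: contraFT tau'b => fb0; apply: (subsetP supp_f); rewrite inE.
Qed.

Lemma mobius_conn_expansion : conn_factorization F -> forall eta, eta != set0 ->
  mobius F eta = \sum_(tau | partition tau eta) \prod_(b in tau) conn_sum b.
Proof.
move=> F_fact eta eta0; rewrite /mobius (negbTE eta0).
rewrite (partition_big (join_base eta) (fun tau => partition tau eta)) /=; last first.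
  by move=> rho; apply: join_base_partition.
apply: eq_bigr => tau tau_part.
rewrite /conn_sum (big_distr_big_dep set0) /= -(sum_parts_with_join_base tau_part).
apply: eq_bigr => rho /andP[rho_part /eqP <-].
by rewrite (F_fact _ _ eta0 rho_part); apply: eq_bigl => b; rewrite inE.
Qed.

End ConnectedExpansion.

Section CumulantInversion.
Variables (R : comNzRingType) (n r : nat).
Variables (F : {set {set ('I_n * 'I_r)}} -> R) (G : {set 'I_n} -> R).
Hypothesis mobius_expansion : forall eta, eta != set0 ->
  mobius F eta = \sum_(tau | partition tau eta) \prod_(b in tau) G b.

Lemma vcum_mobius_inversion eta : eta != set0 -> vcum F eta = G eta.
Proof.
suff vcum_fuelE k : eta != set0 -> (#|eta| <= k)%N -> vcum_fuel F k eta = G eta.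
  by move=> eta0; apply: vcum_fuelE.
elim: k eta => [|k IHk] eta eta0 eta_le.
  by rewrite leqn0 cards_eq0 (negbTE eta0) in eta_le.
have mobiusE : mobius F eta = G eta +
    \sum_(tau | partition tau eta && (1 < #|tau|)%N) \prod_(b in tau) G b.
  rewrite mobius_expansion // (bigD1 [set eta]) ?partition_set1 //= big_set1.
  congr (_ + _); apply: eq_bigl => tau.
  by case: (boolP (partition tau eta)) => //= /partition_neq_set1->.
rewrite /= mobiusE; case: ifP => [/eqP eta1 | _].
  rewrite big_pred0 ?addr0 // => tau; apply/andP => -[part_tau tau_gt1].
  have /set0Pn[b tau_b] : tau != set0 by rewrite -card_gt0 ltnW.
  have := partition_card_lt part_tau tau_gt1 tau_b; rewrite eta1 ltnS leqn0 cards_eq0.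
  by rewrite (negbTE (partition_neq0 part_tau tau_b)).
set S := (X in G eta + X); rewrite -[RHS](addrK S); congr (_ - _).
apply: eq_bigr => tau /andP[part_tau tau_gt1].
apply: eq_bigr => b tau_b; apply: IHk; first exact: partition_neq0 part_tau tau_b.
by rewrite -ltnS (leq_trans (partition_card_lt part_tau tau_gt1 tau_b)).
Qed.

End CumulantInversion.

Theorem proposition3p3 (R : realFieldType) (n r : nat)
  (hn : (1 <= n)%N) (hr : (1 <= r)%N)
  (F : {set {set ('I_n * 'I_r)}} -> R) :
  conn_factorization F ->
  forall eta : {set 'I_n}, eta != set0 ->
    vcum F eta =
    \sum_(sigma : {set {set ('I_n * 'I_r)}} |
            is_part eta sigma && (pjoin sigma (pi_eta r eta) == one_hat r eta))
       F sigma.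
Proof.
by move=> F_fact; apply: vcum_mobius_inversion; apply: mobius_conn_expansion.
Qed.
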